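(* Let $W$ be a Coxeter group, $w\in W$, $J\subseteq S$, and suppose $w=w^Jw_J$ is a Billey--Postnikov decomposition with $\supp(w^J)\cap\supp(w_J)=\{s\}$ for some $s\in S$. Then the middle multiplication map $\phi:x\mapsto x^J\,s\,x_J$ is a special matching of (the Hasse diagram of) the Bruhat interval $[e,w]$.
   Context: $(W,S)$ is a Coxeter system with length $\ell$, Bruhat order $\le$, identity $e$. For $J\subseteq S$, each $x$ factors uniquely as $x=x^Jx_J$ with $x_J\in W_J=\langle J\rangle$ and $x^J$ the minimal-length element of $xW_J$. $\supp(x)$ is the set of simple generators in a reduced word of $x$, $D_L(x)=\{s\in S:\ell(sx)<\ell(x)\}$. $w=w^Jw_J$ is a BP-decomposition if $\supp(w^J)\cap J\subseteq D_L(w_J)$. The Hasse diagram of a poset $P$ is the graph on $P$ whose edges are cover relations $x\lessdot y$; a perfect matching is a fixed-point-free involution $M$ with each $\{x,M(x)\}$ an edge; it is a special matching if for every cover $x\lessdot y$ either $M(x)=y$ or $M(x)<M(y)$. *)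

From Stdlib Require Import List Arith Relations ClassicalEpsilon.
Import ListNotations.
Set Implicit Arguments.

Record gen_group := GenGroup {
  carrier :> Type;
  mul : carrier -> carrier -> carrier;
  one : carrier;
  inv : carrier -> carrier;
  mulA : forall x y z, mul x (mul y z) = mul (mul x y) z;
  mul1g : forall x, mul one x = x;
  mulVg : forall x, mul (inv x) x = one;
  simple : carrier -> Prop
}.

Arguments simple : clear implicits.
Arguments one : clear implicits.
Arguments mul {_}.
Arguments inv {_}.

Section Coxeter.
Variable G : gen_group.

Definition gprod (l : list G) : G := fold_right (@mul G) (one G) l.
Definition sword (l : list G) : Prop := Forall (simple G) l.

Definition length_is (x : G) (n : nat) : Prop :=
  (exists l, sword l /\ gprod l = x /\ List.length l = n) /\
  (forall l, sword l -> gprod l = x -> n <= List.length l).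

Definition ell (x : G) : nat := epsilon (inhabits 0) (length_is x).

Definition delete_at (i : nat) (l : list G) : list G := firstn i l ++ skipn (Datatypes.S i) l.

(* (W,S) is a Coxeter system: S consists of involutions (distinct from e),
   generates W, and the Exchange Property holds (Björner–Brenti Thm 1.5.1). *)
Definition coxeter_system : Prop :=
  (forall s, simple G s -> mul s s = one G /\ s <> one G) /\
  (forall x : G, exists l, sword l /\ gprod l = x) /\
  (forall (l : list G) (s : G), sword l -> List.length l = ell (gprod l) ->
     simple G s -> ell (mul s (gprod l)) <= List.length l ->
     exists i, i < List.length l /\ mul s (gprod l) = gprod (delete_at i l)).

Definition reflection (t : G) : Prop :=
  exists w s, simple G s /\ t = mul (mul w s) (inv w).

Definition bruhat_step (x y : G) : Prop :=
  exists t, reflection t /\ y = mul x t /\ ell x < ell y.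
Definition bruhat_le : G -> G -> Prop := clos_refl_trans G bruhat_step.
Definition bruhat_lt (x y : G) : Prop := bruhat_le x y /\ x <> y.

Definition inWJ (J : G -> Prop) (x : G) : Prop :=
  exists l, Forall J l /\ gprod l = x.

Definition min_coset_rep (J : G -> Prop) (x y : G) : Prop :=
  inWJ J (mul (inv y) x) /\
  (forall z, inWJ J (mul (inv z) x) -> ell y <= ell z).

Definition upJ (J : G -> Prop) (x : G) : G :=
  epsilon (inhabits (one G)) (min_coset_rep J x).
Definition downJ (J : G -> Prop) (x : G) : G := mul (inv (upJ J x)) x.

Definition supp (x : G) (s : G) : Prop :=
  exists l, sword l /\ gprod l = x /\ List.length l = ell x /\ In s l.

Definition DL (x : G) (s : G) : Prop := simple G s /\ ell (mul s x) < ell x.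

Definition BP_decomposition (J : G -> Prop) (w : G) : Prop :=
  forall s, supp (upJ J w) s -> J s -> DL (downJ J w) s.

Definition interval (u v x : G) : Prop := bruhat_le u x /\ bruhat_le x v.

Definition covers_in (P : G -> Prop) (x y : G) : Prop :=
  P x /\ P y /\ bruhat_lt x y /\
  ~ (exists z, P z /\ bruhat_lt x z /\ bruhat_lt z y).

Definition special_matching (P : G -> Prop) (M : G -> G) : Prop :=
  (forall x, P x -> P (M x)) /\
  (forall x, P x -> M (M x) = x) /\
  (forall x, P x -> M x <> x) /\
  (forall x, P x -> covers_in P x (M x) \/ covers_in P (M x) x) /\
  (forall x y, covers_in P x y -> M x = y \/ bruhat_lt (M x) (M y)).

Definition middle_mult (J : G -> Prop) (s x : G) : G :=
  mul (mul (upJ J x) s) (downJ J x).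

End Coxeter.

(* Since s lies in supp(w_J), a subset of J, the parabolic
   factorisation of phi x is x^J (s x_J): phi is a fixed-point-free involution, phi x = x t
   for a reflection t, and l(phi x) = l(x) +- 1.
   Closure: for x <= w the BP property gives x^J <= w^J and x_J <= w_J (induction on l(w^J)
   with Deodhar's lemma); s is a left descent of w_J, so s x_J <= w_J by the lifting property,
   and multiplication is Bruhat-monotone on the length-additive product w = w^J w_J.
   Special matching: if x is covered by y, strong exchange deletes one letter from a reduced
   word of y^J y_J.  If the letter lies in y_J, then x = y^J b with b -> y_J, and the lifting
   property for s b, s y_J in W_J is carried over by left multiplication with y^J.  If it lies
   in y^J, then x = p y_J with p <= w^J; the letters of p_J lie in J and in supp(w^J), hence
   equal s, so phi x = p s y_J.  The lifting property for p s, y^J s is carried over by right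
   multiplication with y_J (or s y_J), which adds lengths because no generator of supp(w^J)
   is a left descent of it. *)

From Stdlib Require Import List Arith Lia Relations Classical ClassicalEpsilon.
Import ListNotations.
Set Implicit Arguments.
Unset Strict Implicit.

Lemma Forall_delete (T : Type) (P : T -> Prop) (l1 l2 : list T) (a : T) :
  Forall P (l1 ++ a :: l2) -> P a /\ Forall P (l1 ++ l2).
Proof. intros [F1 F2]%Forall_app. inversion F2. split; auto. apply Forall_app; auto. Qed.

Section Group.
Variable G : gen_group.
Local Notation "x ** y" := (@mul G x y) (at level 40, left associativity).

Lemma mulgV (x : G) : x ** inv x = one G.
Proof.
  rewrite <- (mul1g G (x ** inv x)), <- (mulVg G (inv x)) at 1.
  rewrite <- mulA, (mulA G (inv x) x), mulVg, mul1g. apply mulVg.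
Qed.

Lemma mulg1 (x : G) : x ** one G = x.
Proof. rewrite <- (mulVg G x), mulA, mulgV. apply mul1g. Qed.

Lemma mulKg (x y : G) : inv x ** (x ** y) = y.
Proof. rewrite mulA, mulVg. apply mul1g. Qed.

Lemma mulKVg (x y : G) : x ** (inv x ** y) = y.
Proof. rewrite mulA, mulgV. apply mul1g. Qed.

Lemma mulgK (x y : G) : y ** x ** inv x = y.
Proof. rewrite <- mulA, mulgV. apply mulg1. Qed.

Lemma mulgKV (x y : G) : y ** inv x ** x = y.
Proof. rewrite <- mulA, mulVg. apply mulg1. Qed.

Lemma mulgI (x y z : G) : x ** y = x ** z -> y = z.
Proof. intro E. rewrite <- (mulKg x y), E. apply mulKg. Qed.

Lemma mulIg (x y z : G) : y ** x = z ** x -> y = z.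
Proof. intro E. rewrite <- (mulgK x y), E. apply mulgK. Qed.

Lemma invg_unique (x y : G) : x ** y = one G -> inv x = y.
Proof. intro E. apply (mulgI (x := x)). rewrite mulgV; auto. Qed.

Lemma invgK (x : G) : inv (inv x) = x.
Proof. apply invg_unique, mulVg. Qed.

Lemma invMg (x y : G) : inv (x ** y) = inv y ** inv x.
Proof. apply invg_unique. rewrite mulA, <- (mulA G x y), mulgV, mulg1, mulgV; auto. Qed.

Lemma invg1 : inv (one G) = one G.
Proof. apply invg_unique, mul1g. Qed.

Lemma gprod_cat (l1 l2 : list G) : gprod G (l1 ++ l2) = gprod G l1 ** gprod G l2.
Proof. induction l1 as [|a l1 IH]; simpl; [now rewrite mul1g | now rewrite IH, mulA]. Qed.

Lemma gprod_rcons (l : list G) a : gprod G (l ++ [a]) = gprod G l ** a.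
Proof. rewrite gprod_cat. simpl. now rewrite mulg1. Qed.

Lemma sword_cat (l1 l2 : list G) : sword G (l1 ++ l2) <-> sword G l1 /\ sword G l2.
Proof. apply Forall_app. Qed.

Lemma gprod_commute (s : G) (l : list G) : Forall (eq s) l -> s ** gprod G l = gprod G l ** s.
Proof.
  induction 1 as [|a l <- _ IH]; simpl.
  - now rewrite mul1g, mulg1.
  - now rewrite <- mulA, IH, mulA.
Qed.

End Group.

Section Coxeter.
Variable G : gen_group.
Hypothesis HG : coxeter_system G.
Local Notation "x ** y" := (@mul G x y) (at level 40, left associativity).

Lemma simple_sqr (s : G) : simple G s -> s ** s = one G.
Proof. intro Hs. apply (proj1 HG); auto. Qed.

Lemma simple_neq1 (s : G) : simple G s -> s <> one G.
Proof. intro Hs. apply (proj1 HG); auto. Qed.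

Lemma invg_simple (s : G) : simple G s -> inv s = s.
Proof. intro Hs. apply invg_unique, simple_sqr; auto. Qed.

Lemma simple_mulK (s x : G) : simple G s -> s ** (s ** x) = x.
Proof. intro Hs. rewrite mulA, simple_sqr, mul1g; auto. Qed.

Lemma simple_mulKr (s x : G) : simple G s -> x ** s ** s = x.
Proof. intro Hs. rewrite <- mulA, simple_sqr, mulg1; auto. Qed.

Lemma gprod_rev (l : list G) : sword G l -> gprod G (rev l) = inv (gprod G l).
Proof.
  induction 1 as [|a l Ha W IH]; simpl.
  - now rewrite invg1.
  - rewrite gprod_cat, IH, invMg. simpl. rewrite mulg1, (invg_simple Ha). reflexivity.
Qed.

(** * Length *)

Lemma ell_spec (x : G) : length_is G x (ell G x).
Proof.
  unfold ell. apply epsilon_spec.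
  destruct (dec_inh_nat_subset_has_unique_least_element
              (fun n => exists l, sword G l /\ gprod G l = x /\ length l = n))
    as [n [[Hn Hmin] _]].
  - intro n. apply classic.
  - destruct (proj1 (proj2 HG) x) as [l [W E]]. eauto.
  - exists n. split; auto. intros l W E. apply Hmin. eauto.
Qed.

Lemma ell_gprod_le (l : list G) : sword G l -> ell G (gprod G l) <= length l.
Proof. intro W. apply (proj2 (ell_spec _)); auto. Qed.

Lemma reduced_word_ex (x : G) :
  exists l, sword G l /\ gprod G l = x /\ length l = ell G x.
Proof. apply ell_spec. Qed.

Lemma ell_delete_lt (l1 l2 : list G) a :
  sword G (l1 ++ a :: l2) -> ell G (gprod G (l1 ++ l2)) < length (l1 ++ a :: l2).
Proof.
  intros [_ W]%Forall_delete. apply ell_gprod_le in W.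
  rewrite !length_app in *. simpl. lia.
Qed.

Lemma ell1 : ell G (one G) = 0.
Proof. pose proof (ell_gprod_le (Forall_nil _)). simpl in H. lia. Qed.

Lemma ell_eq0 (x : G) : ell G x = 0 -> x = one G.
Proof.
  intro H. destruct (reduced_word_ex x) as [[|] [_ [<- L]]]; simpl in *; auto. lia.
Qed.

Lemma ell_mul_le (x y : G) : ell G (x ** y) <= ell G x + ell G y.
Proof.
  destruct (reduced_word_ex x) as [l1 [W1 [<- L1]]].
  destruct (reduced_word_ex y) as [l2 [W2 [<- L2]]].
  rewrite <- gprod_cat, <- L1, <- L2, <- length_app.
  apply ell_gprod_le, sword_cat; auto.
Qed.

Lemma reduced_word_prefix (l1 l2 : list G) : sword G (l1 ++ l2) ->
  length (l1 ++ l2) = ell G (gprod G (l1 ++ l2)) -> length l1 = ell G (gprod G l1).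
Proof.
  intros [W1 W2]%sword_cat Len. rewrite gprod_cat, length_app in Len.
  pose proof (ell_mul_le (gprod G l1) (gprod G l2)).
  pose proof (ell_gprod_le W1). pose proof (ell_gprod_le W2). lia.
Qed.

Lemma ell_invg (x : G) : ell G (inv x) = ell G x.
Proof.
  assert (le_inv : forall y, ell G (inv y) <= ell G y).
  { intro y. destruct (reduced_word_ex y) as [l [W [<- L]]].
    rewrite <- gprod_rev, <- L, <- length_rev; auto.
    apply ell_gprod_le, Forall_rev; auto. }
  pose proof (le_inv x). pose proof (le_inv (inv x)). rewrite invgK in *. lia.
Qed.

Lemma ell_simple (s : G) : simple G s -> ell G s = 1.
Proof.
  intro Hs. pose proof (ell_gprod_le (Forall_cons _ Hs (Forall_nil _))) as H.
  simpl in H. rewrite mulg1 in H.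
  destruct (ell G s) eqn:E; [|lia]. exfalso. apply (simple_neq1 Hs), ell_eq0; auto.
Qed.

Lemma ell_lmul_simple_le (s x : G) : simple G s -> ell G (s ** x) <= S (ell G x).
Proof. intro Hs. pose proof (ell_mul_le s x). rewrite (ell_simple Hs) in H. lia. Qed.

Lemma ell_rmul_simple_le (s x : G) : simple G s -> ell G (x ** s) <= S (ell G x).
Proof. intro Hs. pose proof (ell_mul_le x s). rewrite (ell_simple Hs) in H. lia. Qed.

Lemma exchange (l : list G) (s : G) :
  sword G l -> length l = ell G (gprod G l) -> simple G s ->
  ell G (s ** gprod G l) <= length l ->
  exists l1 a l2, l = l1 ++ a :: l2 /\ s ** gprod G l = gprod G (l1 ++ l2).
Proof.
  intros W L Hs Hl. destruct (proj2 (proj2 HG) l s W L Hs Hl) as [i [Hi E]].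
  destruct (nth_split l s Hi) as [l1 [l2 [El Len]]].
  exists l1, (nth i l s), l2. split; auto.
  rewrite E. f_equal. unfold delete_at. rewrite El at 1 2.
  rewrite firstn_app, skipn_app, <- Len, Nat.sub_diag, firstn_all, skipn_all2,
    Nat.sub_succ_l, Nat.sub_diag by lia.
  simpl. now rewrite app_nil_r.
Qed.

Lemma ell_lmul_simple (s x : G) :
  simple G s -> ell G (s ** x) = S (ell G x) \/ S (ell G (s ** x)) = ell G x.
Proof.
  intro Hs.
  assert (ell G (s ** x) <> ell G x).
  { intro Eq. destruct (reduced_word_ex x) as [l [W [<- L]]].
    destruct (exchange W L Hs) as [l1 [a [l2 [-> E]]]]; [lia|].
    pose proof (ell_delete_lt W). rewrite <- E in H. lia. }
  pose proof (ell_lmul_simple_le x Hs). pose proof (ell_lmul_simple_le (s ** x) Hs).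
  rewrite simple_mulK in H1; auto. lia.
Qed.

Lemma ell_rmul_simple (s x : G) :
  simple G s -> ell G (x ** s) = S (ell G x) \/ S (ell G (x ** s)) = ell G x.
Proof.
  intro Hs. rewrite <- (ell_invg (x ** s)), <- (ell_invg x), invMg, invg_simple; auto.
  apply ell_lmul_simple; auto.
Qed.

Lemma supp_of_descent (r v : G) : simple G r -> ell G (r ** v) < ell G v -> supp G v r.
Proof.
  intros Hr Hl. destruct (reduced_word_ex v) as [L [W [<- Len]]].
  destruct (exchange W Len Hr) as [l1 [a [l2 [-> E]]]]; [lia|].
  exists (r :: l1 ++ l2). repeat split.
  - constructor; auto. apply (Forall_delete W).
  - simpl. rewrite <- E, simple_mulK; auto.
  - rewrite <- Len, !length_app. simpl. rewrite length_app. lia.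
  - now left.
Qed.

(** * Reflections and the strong exchange property *)

Lemma reflection_simple (s : G) : simple G s -> reflection G s.
Proof. intro Hs. exists (one G), s. rewrite invg1, mulg1, mul1g. auto. Qed.

Lemma reflection_conj (t x : G) : reflection G t -> reflection G (x ** t ** inv x).
Proof.
  intros [w [s [Hs ->]]]. exists (x ** w), s. split; auto. rewrite invMg, !mulA. auto.
Qed.

Lemma reflection_conjV (t x : G) : reflection G t -> reflection G (inv x ** t ** x).
Proof. intro Ht. rewrite <- (invgK x) at 2. apply reflection_conj; auto. Qed.

Lemma reflection_sqr (t : G) : reflection G t -> t ** t = one G.
Proof.
  intros [w [s [Hs ->]]].
  rewrite !mulA, mulgKV, simple_mulKr, mulgV; auto.
Qed.

Lemma invg_reflection (t : G) : reflection G t -> inv t = t.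
Proof. intro Ht. apply invg_unique, reflection_sqr; auto. Qed.

Lemma delete_letter_reflection (l1 l2 : list G) a : simple G a ->
  exists t, reflection G t /\ gprod G (l1 ++ a :: l2) = gprod G (l1 ++ l2) ** t.
Proof.
  intro Ha. exists (inv (gprod G l2) ** a ** gprod G l2). split.
  - apply reflection_conjV, reflection_simple; auto.
  - rewrite !gprod_cat, !mulA, mulgK. simpl. now rewrite mulA.
Qed.

Lemma lmul_eq_rmul_of_descent_switch (s r z : G) : simple G s -> simple G r ->
  ell G z < ell G (s ** z) -> ell G (s ** (z ** r)) < ell G (z ** r) -> z ** r = s ** z.
Proof.
  intros Hs Hr H1 H2.
  destruct (ell_rmul_simple z Hr) as [Ezr|Ezr].
  2:{ pose proof (ell_rmul_simple_le (s ** z ** r) Hr).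
      rewrite simple_mulKr, mulA in *; auto. lia. }
  destruct (reduced_word_ex z) as [L [W [<- Len]]].
  assert (Wr : sword G (L ++ [r])) by (apply sword_cat; split; [|constructor]; auto).
  assert (Lr : length (L ++ [r]) = ell G (gprod G (L ++ [r])))
    by (rewrite gprod_rcons, length_app; simpl; lia).
  destruct (exchange Wr Lr Hs) as [l1 [a [l2 [EL E]]]].
  { rewrite gprod_rcons, length_app. simpl. lia. }
  rewrite gprod_rcons in E.
  destruct l2 as [|b l2] using rev_ind.
  - apply app_inj_tail in EL as [-> ->]. rewrite app_nil_r in E.
    rewrite <- E at 2. rewrite simple_mulK; auto.
  - exfalso. rewrite app_comm_cons, app_assoc in EL. apply app_inj_tail in EL as [-> ->].
    rewrite app_assoc, gprod_rcons, mulA in E. apply mulIg in E.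
    pose proof (ell_delete_lt W). rewrite <- E, !length_app in *. simpl in *. lia.
Qed.

Section StrongExchange.
Variables (w0 s0 : G).
Hypothesis Hs0 : simple G s0.
Let t := w0 ** s0 ** inv w0.

(* As [t] negates [chi] while a simple
   right factor can change [chi] only by acting as [t], the first letter of a word at which
   [chi] changes is a letter that [t] deletes. *)
Let chi (y : G) := ell G (inv w0 ** y) < ell G (s0 ** (inv w0 ** y)).

Lemma chi_lmul (y : G) : chi (t ** y) <-> ~ chi y.
Proof.
  unfold chi, t. rewrite <- !mulA, mulKg, simple_mulK; auto.
  destruct (ell_lmul_simple (inv w0 ** y) Hs0); split; intros; lia.
Qed.

Lemma chi_switch_rmul (z r : G) : simple G r -> ~ (chi z <-> chi (z ** r)) -> z ** r = t ** z.
Proof.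
  intros Hr Hsw. unfold chi, t in *.
  set (z' := inv w0 ** z) in *.
  replace (inv w0 ** (z ** r)) with (z' ** r) in Hsw by (unfold z'; symmetry; apply mulA).
  assert (Ez : z = w0 ** z') by (unfold z'; now rewrite mulKVg).
  assert (E : z' ** r = s0 ** z').
  { destruct (ell_lmul_simple z' Hs0) as [Up|Down].
    - apply lmul_eq_rmul_of_descent_switch; auto; [lia|].
      destruct (ell_lmul_simple (z' ** r) Hs0); [|lia].
      exfalso. apply Hsw. split; intro; lia.
    - assert (ell G (z' ** r) < ell G (s0 ** (z' ** r))).
      { apply NNPP. intro N. apply Hsw. split; intro; [lia | tauto]. }
      pose proof (@lmul_eq_rmul_of_descent_switch s0 r (z' ** r) Hs0 Hr H).
      rewrite simple_mulKr in H0 by auto. rewrite H0 at 2 by lia.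
      now rewrite simple_mulK. }
  rewrite Ez, <- mulA, E, !mulA, mulgKV. reflexivity.
Qed.

Lemma chi_switch_word (l : list G) (z : G) : sword G l -> ~ (chi z <-> chi (z ** gprod G l)) ->
  exists l1 a l2, l = l1 ++ a :: l2 /\ t ** (z ** gprod G l1) = z ** gprod G l1 ** a.
Proof.
  revert z. induction l as [|a l IH]; intros z W Hsw.
  - exfalso. apply Hsw. simpl. rewrite mulg1. tauto.
  - inversion W as [|? ? Ha Wl]; subst.
    destruct (classic (chi z <-> chi (z ** a))) as [I|I].
    + destruct (IH (z ** a) Wl) as [l1 [b [l2 [-> E]]]].
      { simpl in Hsw. rewrite mulA in Hsw. tauto. }
      exists (a :: l1), b, l2. simpl. rewrite !mulA in *. auto.
    + exists [], a, l. simpl. rewrite !mulg1. split; auto.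
      symmetry. apply chi_switch_rmul; auto.
Qed.

Lemma strong_exchange_conj (l : list G) : sword G l -> ell G (t ** gprod G l) < ell G (gprod G l) ->
  exists l1 a l2, l = l1 ++ a :: l2 /\ t ** gprod G l = gprod G (l1 ++ l2).
Proof.
  assert (deletion : forall l1 a l2, simple G a -> t ** gprod G l1 = gprod G l1 ** a ->
                       t ** gprod G (l1 ++ a :: l2) = gprod G (l1 ++ l2)).
  { intros l1 a l2 Ha E. rewrite !gprod_cat. simpl.
    rewrite mulA, E, <- mulA, simple_mulK; auto. }
  intros W Hlt.
  assert (Hsw : ~ (chi (one G) <-> chi (one G ** gprod G l))).
  { rewrite mul1g. intro I.
    destruct (reduced_word_ex (t ** gprod G l)) as [L [WL [EL Len]]].
    destruct (@chi_switch_word L (one G) WL) as [l1 [a [l2 [-> E]]]].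
    { rewrite mul1g, EL. pose proof (chi_lmul (gprod G l)). tauto. }
    rewrite !mul1g in E.
    pose proof (deletion l1 a l2 (proj1 (Forall_delete WL)) E) as D.
    rewrite EL, mulA, reflection_sqr, mul1g in D.
    2:{ exists w0, s0. auto. }
    pose proof (ell_delete_lt WL). rewrite <- D in H. lia. }
  destruct (chi_switch_word W Hsw) as [l1 [a [l2 [-> E]]]].
  rewrite !mul1g in E. exists l1, a, l2. split; auto.
  apply deletion; auto. apply (Forall_delete W).
Qed.

End StrongExchange.

Lemma strong_exchange (t : G) (l : list G) :
  reflection G t -> sword G l -> ell G (t ** gprod G l) < ell G (gprod G l) ->
  exists l1 a l2, l = l1 ++ a :: l2 /\ t ** gprod G l = gprod G (l1 ++ l2).
Proof. intros [w [s [Hs ->]]]. apply strong_exchange_conj; auto. Qed.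

Lemma strong_exchange_r (t : G) (l : list G) :
  reflection G t -> sword G l -> ell G (gprod G l ** t) < ell G (gprod G l) ->
  exists l1 a l2, l = l1 ++ a :: l2 /\ gprod G l ** t = gprod G (l1 ++ l2).
Proof.
  intros Ht W Hlt.
  replace (gprod G l ** t) with (gprod G l ** t ** inv (gprod G l) ** gprod G l) in *
    by apply mulgKV.
  apply strong_exchange; auto. apply reflection_conj; auto.
Qed.

Lemma strong_exchange_r_cat (t : G) (M L : list G) :
  reflection G t -> sword G M -> sword G L ->
  ell G (gprod G M ** gprod G L ** t) < ell G (gprod G M ** gprod G L) ->
  (exists M1 a M2, M = M1 ++ a :: M2 /\
     gprod G M ** gprod G L ** t = gprod G (M1 ++ M2) ** gprod G L) \/
  (exists L1 a L2, L = L1 ++ a :: L2 /\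
     gprod G M ** gprod G L ** t = gprod G M ** gprod G (L1 ++ L2)).
Proof.
  intros Ht WM WL Hlt. rewrite <- gprod_cat in *.
  destruct (strong_exchange_r Ht (proj2 (sword_cat M L) (conj WM WL)) Hlt)
    as [l1 [a [l2 [EML E]]]].
  rewrite E. apply app_eq_app in EML as [mid [[-> Emid] | [-> ->]]].
  - destruct mid as [|b mid]; simpl in Emid.
    + subst L. right. exists [], a, l2. rewrite app_nil_r, gprod_cat. auto.
    + injection Emid as -> ->. left. exists l1, b, mid.
      rewrite <- gprod_cat, <- app_assoc. auto.
  - right. exists mid, a, l2. rewrite <- gprod_cat, app_assoc. auto.
Qed.

(** * Bruhat order *)

Local Notation le := (bruhat_le G).
Local Notation step := (bruhat_step G).

Lemma bruhat_le_refl (x : G) : le x x.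
Proof. apply rt_refl. Qed.

Lemma bruhat_le_trans (x y z : G) : le x y -> le y z -> le x z.
Proof. apply rt_trans. Qed.

Lemma bruhat_step_le (x y : G) : step x y -> le x y.
Proof. apply rt_step. Qed.

Lemma bruhat_step_ell (x y : G) : step x y -> ell G x < ell G y.
Proof. intros [t [_ [_ H]]]. auto. Qed.

Lemma bruhat_le_ell (x y : G) : le x y -> ell G x <= ell G y.
Proof. induction 1; [apply bruhat_step_ell in H|..]; lia. Qed.

Lemma bruhat_lt_ell (x y : G) : le x y -> x <> y -> ell G x < ell G y.
Proof.
  intros H Hne. apply clos_rt_rt1n in H.
  inversion H as [|z ? Hxz Hzy]; subst; [congruence|].
  apply bruhat_step_ell in Hxz. apply clos_rt1n_rt, bruhat_le_ell in Hzy. lia.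
Qed.

Lemma bruhat_step_rmul (t y : G) : reflection G t -> ell G y < ell G (y ** t) -> step y (y ** t).
Proof. intros. exists t. auto. Qed.

Lemma bruhat_step_lmul (t y : G) : reflection G t -> ell G y < ell G (t ** y) -> step y (t ** y).
Proof.
  intros Ht H. exists (inv y ** t ** y). repeat split; auto.
  - apply reflection_conjV; auto.
  - now rewrite !mulA, mulgV, mul1g.
Qed.

Lemma step_lascent (s x : G) : simple G s -> ell G x < ell G (s ** x) -> step x (s ** x).
Proof. intros Hs H. apply bruhat_step_lmul; [apply reflection_simple|]; auto. Qed.

Lemma step_ldescent (s x : G) : simple G s -> ell G (s ** x) < ell G x -> step (s ** x) x.
Proof.
  intros Hs H. rewrite <- (simple_mulK x Hs) at 2.
  apply step_lascent; auto. rewrite simple_mulK; auto.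
Qed.

Lemma step_rascent (s x : G) : simple G s -> ell G x < ell G (x ** s) -> step x (x ** s).
Proof. intros Hs H. apply bruhat_step_rmul; [apply reflection_simple|]; auto. Qed.

Lemma step_rdescent (s x : G) : simple G s -> ell G (x ** s) < ell G x -> step (x ** s) x.
Proof.
  intros Hs H. rewrite <- (simple_mulKr x Hs) at 2.
  apply step_rascent; auto. rewrite simple_mulKr; auto.
Qed.

Lemma bruhat_le1 (x : G) : le (one G) x.
Proof.
  destruct (reduced_word_ex x) as [l [W [<- Len]]].
  induction l as [|a l IH]; [apply bruhat_le_refl|].
  inversion W as [|? ? Ha Wl]; subst. simpl in *.
  pose proof (ell_gprod_le Wl). pose proof (ell_lmul_simple_le (gprod G l) Ha).
  apply (bruhat_le_trans (IH Wl ltac:(lia))).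
  apply bruhat_step_le, step_lascent; auto. lia.
Qed.

Lemma bruhat_step_invg (x y : G) : step x y -> step (inv x) (inv y).
Proof.
  intros [t [Ht [-> H]]]. rewrite invMg, (invg_reflection Ht).
  apply bruhat_step_lmul; auto.
  replace (t ** inv x) with (inv (x ** t)) by (rewrite invMg, (invg_reflection Ht); auto).
  rewrite !ell_invg. auto.
Qed.

Lemma bruhat_le_invg (x y : G) : le x y -> le (inv x) (inv y).
Proof.
  induction 1; [apply bruhat_step_le, bruhat_step_invg; auto | apply bruhat_le_refl |].
  eapply bruhat_le_trans; eauto.
Qed.

Lemma bruhat_le_invgE (x y : G) : le (inv x) (inv y) -> le x y.
Proof. intro H. apply bruhat_le_invg in H. rewrite !invgK in H. auto. Qed.

Lemma bruhat_step_lmul_simple (s b d : G) : simple G s -> step b d ->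
  s ** b = d \/ le (s ** b) (s ** d).
Proof.
  intros Hs Hbd. pose proof Hbd as [t [Ht [Ed Hl]]].
  assert (Hst : ell G (s ** b) < ell G (s ** d) -> le (s ** b) (s ** d)).
  { intro. subst d. rewrite mulA. apply bruhat_step_le, bruhat_step_rmul; auto.
    rewrite <- mulA. auto. }
  destruct (ell_lmul_simple b Hs) as [Ub|Db], (ell_lmul_simple d Hs) as [Ud|Dd];
    try (right; apply Hst; lia).
  (* [s] ascends [b] and descends [d]: [b] is obtained by deleting a letter of [s :: L] *)
  destruct (reduced_word_ex (s ** d)) as [L [W [EL Len]]].
  assert (Ed' : gprod G (s :: L) = d) by (simpl; rewrite EL, simple_mulK; auto).
  assert (Eb : b = (d ** t ** inv d) ** d).
  { rewrite mulgKV, Ed, <- mulA, reflection_sqr, mulg1; auto. }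
  destruct (@strong_exchange (d ** t ** inv d) (s :: L)) as [l1 [a [l2 [EsL E]]]].
  - apply reflection_conj; auto.
  - constructor; auto.
  - rewrite Ed', <- Eb. lia.
  - rewrite Ed', <- Eb in E.
    destruct l1 as [|c l1]; simpl in EsL; injection EsL as <- EL'.
    + left. subst l2. rewrite E. simpl. rewrite EL, simple_mulK; auto.
    + right. subst L. rewrite <- EL, E. simpl. rewrite simple_mulK; auto.
      destruct (delete_letter_reflection l1 l2 (proj1 (Forall_delete W))) as [t' [Ht' Et']].
      rewrite Et'. apply bruhat_step_le, bruhat_step_rmul; auto.
      rewrite <- Et', EL. pose proof (ell_delete_lt W). lia.
Qed.

Definition lmin (s x : G) : G := if ell G (s ** x) <? ell G x then s ** x else x.
Definition lmax (s x : G) : G := if ell G (s ** x) <? ell G x then x else s ** x.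

Lemma lmin_lmax_spec (s x : G) : simple G s ->
  (ell G (s ** x) < ell G x /\ lmin s x = s ** x /\ lmax s x = x) \/
  (ell G x < ell G (s ** x) /\ lmin s x = x /\ lmax s x = s ** x).
Proof.
  intro Hs. unfold lmin, lmax.
  destruct (Nat.ltb_spec (ell G (s ** x)) (ell G x)); [left | right]; repeat split; auto.
  destruct (ell_lmul_simple x Hs); lia.
Qed.

Lemma lmin_lmax_lmul (s x : G) : simple G s ->
  lmin s (s ** x) = lmin s x /\ lmax s (s ** x) = lmax s x.
Proof.
  intro Hs.
  destruct (lmin_lmax_spec x Hs) as [[H [-> ->]] | [H [-> ->]]],
    (lmin_lmax_spec (s ** x) Hs) as [[H' [-> ->]] | [H' [-> ->]]];
    rewrite ?simple_mulK in *; auto; lia.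
Qed.

Lemma lmin_lmax_bounds (s x : G) : simple G s ->
  le (lmin s x) x /\ le (lmin s x) (s ** x) /\ le x (lmax s x) /\ le (s ** x) (lmax s x).
Proof.
  intro Hs. destruct (lmin_lmax_spec x Hs) as [[H [-> ->]] | [H [-> ->]]];
    repeat split; auto using bruhat_le_refl, bruhat_step_le, step_lascent, step_ldescent.
Qed.

Lemma lmin_lmax_mono (s b d : G) : simple G s -> le b d -> le (s ** b) (s ** d) ->
  le (lmin s b) (lmin s d) /\ le (lmax s b) (lmax s d).
Proof.
  intros Hs Hbd Hsbd.
  destruct (lmin_lmax_bounds b Hs) as [Hb1 [Hb2 [Hb3 Hb4]]].
  destruct (lmin_lmax_bounds d Hs) as [Hd1 [Hd2 [Hd3 Hd4]]].
  destruct (lmin_lmax_spec d Hs) as [[_ [Ed1 Ed2]] | [_ [Ed1 Ed2]]];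
    destruct (lmin_lmax_spec b Hs) as [[_ [Eb1 Eb2]] | [_ [Eb1 Eb2]]];
    rewrite Ed1, Ed2, Eb1, Eb2 in *; split; eauto using bruhat_le_trans.
Qed.

(* The lifting property (Björner–Brenti, Prop. 2.2.7) in its monotone form. *)
Lemma bruhat_le_lmin_lmax (s x y : G) : simple G s -> le x y ->
  le (lmin s x) (lmin s y) /\ le (lmax s x) (lmax s y).
Proof.
  intros Hs Hxy. induction Hxy as [x y Hxy | x | x y z _ [IH1 IH2] _ [IH3 IH4]].
  - destruct (bruhat_step_lmul_simple Hs Hxy) as [<- | Hle].
    + destruct (lmin_lmax_lmul x Hs) as [-> ->]. split; apply bruhat_le_refl.
    + apply lmin_lmax_mono; auto using bruhat_step_le.
  - split; apply bruhat_le_refl.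
  - split; eapply bruhat_le_trans; eauto.
Qed.

Ltac lifting_cases s x y Hs Hxy :=
  destruct (bruhat_le_lmin_lmax Hs Hxy);
  destruct (lmin_lmax_spec x Hs) as [[? [Ex1 Ex2]] | [? [Ex1 Ex2]]];
  destruct (lmin_lmax_spec y Hs) as [[? [Ey1 Ey2]] | [? [Ey1 Ey2]]];
  rewrite ?Ex1, ?Ex2, ?Ey1, ?Ey2 in *; try lia.

Lemma lifting_ldescent (s x y : G) : simple G s -> le x y ->
  ell G (s ** y) < ell G y -> le (s ** x) y.
Proof.
  intros Hs Hxy Hy. lifting_cases s x y Hs Hxy;
    eauto using bruhat_le_trans, bruhat_step_le, step_ldescent.
Qed.

Lemma lifting_lascents (s x y : G) : simple G s -> le x y ->
  ell G x < ell G (s ** x) -> ell G y < ell G (s ** y) -> le (s ** x) (s ** y).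
Proof. intros Hs Hxy Hx Hy. lifting_cases s x y Hs Hxy. auto. Qed.

Lemma lifting_ldescents (s x y : G) : simple G s -> le x y ->
  ell G (s ** x) < ell G x -> ell G (s ** y) < ell G y -> le (s ** x) (s ** y).
Proof. intros Hs Hxy Hx Hy. lifting_cases s x y Hs Hxy. auto. Qed.

Lemma lifting_lmixed (s x y : G) : simple G s -> le x y ->
  ell G x < ell G (s ** x) -> ell G (s ** y) < ell G y -> le x (s ** y).
Proof. intros Hs Hxy Hx Hy. lifting_cases s x y Hs Hxy. auto. Qed.

Lemma invg_rmul_simple (s x : G) : simple G s -> inv (x ** s) = s ** inv x.
Proof. intro Hs. rewrite invMg, invg_simple; auto. Qed.

Lemma ell_rmul_invg (s x : G) : simple G s -> ell G (s ** inv x) = ell G (x ** s).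
Proof. intro Hs. rewrite <- invg_rmul_simple, ell_invg; auto. Qed.

Lemma lifting_rascents (s x y : G) : simple G s -> le x y ->
  ell G x < ell G (x ** s) -> ell G y < ell G (y ** s) -> le (x ** s) (y ** s).
Proof.
  intros Hs Hxy Hx Hy. apply bruhat_le_invgE. rewrite !invg_rmul_simple by auto.
  apply lifting_lascents; rewrite ?ell_rmul_invg, ?ell_invg; auto using bruhat_le_invg.
Qed.

Lemma lifting_rdescents (s x y : G) : simple G s -> le x y ->
  ell G (x ** s) < ell G x -> ell G (y ** s) < ell G y -> le (x ** s) (y ** s).
Proof.
  intros Hs Hxy Hx Hy. apply bruhat_le_invgE. rewrite !invg_rmul_simple by auto.
  apply lifting_ldescents; rewrite ?ell_rmul_invg, ?ell_invg; auto using bruhat_le_invg.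
Qed.

Lemma lifting_rmixed (s x y : G) : simple G s -> le x y ->
  ell G x < ell G (x ** s) -> ell G (y ** s) < ell G y -> le x (y ** s).
Proof.
  intros Hs Hxy Hx Hy. apply bruhat_le_invgE. rewrite !invg_rmul_simple by auto.
  apply lifting_lmixed; rewrite ?ell_rmul_invg, ?ell_invg; auto using bruhat_le_invg.
Qed.

Lemma bruhat_step_rmul_simple (s p c : G) : simple G s -> step p c ->
  p ** s = c \/ le (p ** s) (c ** s).
Proof.
  intros Hs Hpc. apply bruhat_step_invg in Hpc.
  destruct (bruhat_step_lmul_simple Hs Hpc) as [E | Hle].
  - left. rewrite <- (invgK (p ** s)), invg_rmul_simple, E, invgK; auto.
  - right. apply bruhat_le_invgE. rewrite !invg_rmul_simple; auto.
Qed.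

Lemma covers_in_of_ell (P : G -> Prop) (x y : G) : P x -> P y -> step x y ->
  ell G y = S (ell G x) -> covers_in G P x y.
Proof.
  intros Px Py Hxy Hl. repeat split; auto.
  - apply bruhat_step_le; auto.
  - intros ->. lia.
  - intros [z [_ [[H1 H2] [H3 H4]]]].
    pose proof (bruhat_lt_ell H1 H2). pose proof (bruhat_lt_ell H3 H4). lia.
Qed.

Lemma covers_in_interval_step (a b x y : G) : covers_in G (interval G a b) x y -> step x y.
Proof.
  intros [[Hax _] [[_ Hyb] [[Hxy Hne] Hno]]].
  apply clos_rt_rt1n in Hxy. inversion Hxy as [|z ? Hxz Hzy]; subst; [congruence|].
  apply clos_rt1n_rt in Hzy.
  destruct (classic (z = y)) as [<- | Hzy']; auto.
  exfalso. apply Hno. exists z. repeat split; auto.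
  - apply (bruhat_le_trans Hax), bruhat_step_le; auto.
  - apply (bruhat_le_trans Hzy Hyb).
  - apply bruhat_step_le; auto.
  - intros ->. apply bruhat_step_ell in Hxz. lia.
Qed.

(** * Parabolic subgroups and minimal coset representatives *)

Section Parabolic.
Variable K : G -> Prop.
Hypothesis HK : forall k, K k -> simple G k.

Lemma sword_of_Forall (l : list G) : Forall K l -> sword G l.
Proof. intro H. eapply Forall_impl; eauto. Qed.

Lemma inWJ1 : inWJ G K (one G).
Proof. exists []. auto. Qed.

Lemma inWJ_gen (k : G) : K k -> inWJ G K k.
Proof. intro H. exists [k]. split; auto. apply mulg1. Qed.

Lemma inWJM (x y : G) : inWJ G K x -> inWJ G K y -> inWJ G K (x ** y).
Proof.
  intros [l1 [F1 <-]] [l2 [F2 <-]]. exists (l1 ++ l2).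
  split; [apply Forall_app | apply gprod_cat]; auto.
Qed.

Lemma inWJV (x : G) : inWJ G K x -> inWJ G K (inv x).
Proof.
  intros [l [F <-]]. exists (rev l).
  split; [apply Forall_rev | apply gprod_rev, sword_of_Forall]; auto.
Qed.

Lemma inWJ_reduced_word (x : G) : inWJ G K x ->
  exists l, Forall K l /\ gprod G l = x /\ length l = ell G x.
Proof.
  intros [l [F <-]]. induction F as [|a l Ha F IH].
  - exists []. simpl. rewrite ell1. auto.
  - destruct IH as [r [Fr [Er Len]]]. simpl.
    destruct (ell_lmul_simple (gprod G l) (HK Ha)) as [Up|Down].
    + exists (a :: r). simpl. rewrite Er. repeat split; auto. lia.
    + rewrite <- Er in Len, Down |- *.
      destruct (exchange (sword_of_Forall Fr) Len (HK Ha)) as [l1 [b [l2 [-> E]]]]; [lia|].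
      exists (l1 ++ l2). rewrite E. repeat split; [apply (Forall_delete Fr)|].
      rewrite <- E. rewrite !length_app in *. simpl in *. lia.
Qed.

Lemma simple_inWJ (s : G) : simple G s -> inWJ G K s -> K s.
Proof.
  intros Hs Hin. destruct (inWJ_reduced_word Hin) as [l [F [E Len]]].
  rewrite (ell_simple Hs) in Len.
  destruct l as [|k [|]]; try discriminate. simpl in E. rewrite mulg1 in E.
  subst. inversion F. auto.
Qed.

Lemma reduced_word_inWJ (l : list G) (x : G) : inWJ G K x ->
  sword G l -> gprod G l = x -> length l = ell G x -> Forall K l.
Proof.
  revert x. induction l as [|a l IH]; intros x Hx W <- Len; [constructor|].
  inversion W as [|? ? Ha Wl]; subst. simpl in Len.
  assert (Hl : inWJ G K (gprod G l)).
  { destruct (inWJ_reduced_word Hx) as [r [Fr [Er Lr]]].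
    rewrite <- Er in Lr.
    destruct (exchange (sword_of_Forall Fr) Lr Ha) as [l1 [b [l2 [-> E]]]].
    - rewrite Lr, Er. simpl. rewrite simple_mulK, <- Len by auto.
      pose proof (ell_gprod_le Wl). lia.
    - rewrite <- (simple_mulK (gprod G l) Ha).
      change (a ** gprod G l) with (gprod G (a :: l)).
      rewrite <- Er, E. exists (l1 ++ l2). split; auto. apply (Forall_delete Fr). }
  constructor.
  - apply simple_inWJ; auto.
    replace a with (gprod G (a :: l) ** inv (gprod G l)) by (simpl; apply mulgK).
    apply inWJM, inWJV; auto.
  - apply (IH (gprod G l)); auto.
    pose proof (ell_gprod_le Wl). pose proof (ell_lmul_simple_le (gprod G l) Ha). lia.
Qed.

Lemma supp_inWJ (x t : G) : inWJ G K x -> supp G x t -> K t.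
Proof.
  intros Hx [l [W [E [Len I]]]].
  pose proof (reduced_word_inWJ Hx W E Len) as F. rewrite Forall_forall in F. auto.
Qed.

Lemma inWJ_bruhat_le (x y : G) : le x y -> inWJ G K y -> inWJ G K x.
Proof.
  intro H. apply clos_rt_rt1n in H. induction H as [|x z y [t [Ht [Ez Hl]]] _ IH]; auto.
  intro Hy. destruct (IH Hy) as [l [F El]].
  assert (Ex : x = (z ** t ** inv z) ** z)
    by (rewrite mulgKV, Ez, <- mulA, reflection_sqr, mulg1; auto).
  destruct (@strong_exchange (z ** t ** inv z) l) as [l1 [a [l2 [-> E]]]].
  - apply reflection_conj; auto.
  - apply sword_of_Forall; auto.
  - rewrite El, <- Ex. lia.
  - exists (l1 ++ l2). split; [apply (Forall_delete F)|]. rewrite <- E, El, <- Ex. auto.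
Qed.

Definition is_min_rep (m : G) : Prop := forall h, inWJ G K h -> ell G m <= ell G (m ** h).

Lemma min_rep_ell_mul (m h : G) : is_min_rep m -> inWJ G K h ->
  ell G (m ** h) = ell G m + ell G h.
Proof.
  intros Hm Hh. destruct (inWJ_reduced_word Hh) as [l [F [<- Len]]].
  rewrite <- Len. clear Hh.
  induction l as [|k l IH] using rev_ind; [simpl; rewrite mulg1; lia|].
  pose proof (sword_of_Forall F) as Wlk.
  apply Forall_app in F as [F Fk]. inversion Fk as [|? ? Hk _]; subst.
  pose proof (sword_of_Forall F) as Wl.
  specialize (IH F (reduced_word_prefix Wlk Len)).
  rewrite gprod_rcons, mulA, length_app. simpl.
  destruct (ell_rmul_simple (m ** gprod G l) (HK Hk)) as [Up|Down]; [lia|exfalso].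
  destruct (reduced_word_ex m) as [M [WM [EM LM]]]. subst m.
  destruct (strong_exchange_r_cat (reflection_simple (HK Hk)) WM Wl ltac:(lia))
    as [[M1 [a [M2 [-> E]]]] | [L1 [a [L2 [-> E]]]]].
  - (* conjugating [k] by [gprod l] would shorten [m] inside its coset *)
    assert (Hc : inWJ G K (gprod G l ** k ** inv (gprod G l))).
    { apply inWJM; [apply inWJM|apply inWJV]; auto using inWJ_gen; exists l; auto. }
    specialize (Hm _ Hc). rewrite !mulA, E, mulgK in Hm.
    pose proof (ell_delete_lt WM). lia.
  - rewrite <- !mulA in E. apply mulgI in E.
    rewrite gprod_rcons, E in Len. pose proof (ell_delete_lt Wl). rewrite !length_app in *.
    simpl in *. lia.
Qed.

Lemma upJ_spec (x : G) : min_coset_rep G K x (upJ G K x).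
Proof.
  unfold upJ. apply epsilon_spec.
  destruct (dec_inh_nat_subset_has_unique_least_element
              (fun n => exists z, inWJ G K (inv z ** x) /\ ell G z = n))
    as [n [[[z [Hz <-]] Hmin] _]].
  - intro n. apply classic.
  - exists (ell G x), x. rewrite mulVg. split; auto using inWJ1.
  - exists z. split; auto. intros z' Hz'. apply Hmin. eauto.
Qed.

Lemma upJ_min_rep (x : G) : is_min_rep (upJ G K x).
Proof.
  destruct (upJ_spec x) as [H1 H2]. intros h Hh. apply H2.
  rewrite invMg, <- mulA. apply inWJM, H1. apply inWJV; auto.
Qed.

Lemma downJ_inWJ (x : G) : inWJ G K (downJ G K x).
Proof. apply upJ_spec. Qed.

Lemma upJ_mul_downJ (x : G) : upJ G K x ** downJ G K x = x.
Proof. apply mulKVg. Qed.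

Lemma min_rep_unique (m m' : G) : is_min_rep m -> is_min_rep m' ->
  inWJ G K (inv m ** m') -> m = m'.
Proof.
  intros Hm Hm' Hh.
  pose proof (min_rep_ell_mul Hm Hh). rewrite mulKVg in H.
  pose proof (Hm' _ (inWJV Hh)). rewrite invMg, invgK, mulKVg in H0.
  rewrite <- (mulKVg m m'), (@ell_eq0 (inv m ** m')), mulg1; auto. lia.
Qed.

Lemma parabolic_decomp (m h : G) : is_min_rep m -> inWJ G K h ->
  upJ G K (m ** h) = m /\ downJ G K (m ** h) = h.
Proof.
  intros Hm Hh.
  assert (E : upJ G K (m ** h) = m).
  { symmetry. apply min_rep_unique; auto using upJ_min_rep.
    replace (inv m ** upJ G K (m ** h)) with (h ** inv (downJ G K (m ** h)))
      by (unfold downJ; rewrite !invMg, invgK, mulA, mulKVg; auto).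
    apply inWJM, inWJV, downJ_inWJ; auto. }
  split; auto. unfold downJ. rewrite E. apply mulKg.
Qed.

Lemma parabolic_decomp_inWJ (x : G) : inWJ G K x -> upJ G K x = one G /\ downJ G K x = x.
Proof.
  intro Hx. rewrite <- (mul1g G x) at 1 2. apply parabolic_decomp; auto.
  intros h _. rewrite ell1. lia.
Qed.

Lemma min_rep_rascent (m k : G) : is_min_rep m -> K k -> ell G m < ell G (m ** k).
Proof.
  intros Hm Hk. rewrite (min_rep_ell_mul Hm (inWJ_gen Hk)), (ell_simple (HK Hk)). lia.
Qed.

Lemma min_rep_of_rascents (y : G) : (forall k, K k -> ell G y < ell G (y ** k)) -> is_min_rep y.
Proof.
  intro Hy. set (m := upJ G K y). set (h := downJ G K y).
  assert (Ey : y = m ** h) by (symmetry; apply upJ_mul_downJ).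
  pose proof (min_rep_ell_mul (upJ_min_rep y) (downJ_inWJ y)) as Ell. fold m h in Ell.
  destruct (inWJ_reduced_word (downJ_inWJ y)) as [l [F [El Len]]]. fold h in El, Len.
  destruct l as [|k l] using rev_ind.
  - rewrite Ey, <- El, mulg1. apply upJ_min_rep.
  - exfalso. apply Forall_app in F as [F Fk]. pose proof (Forall_inv Fk) as Hk.
    assert (Eyk : y ** k = m ** gprod G l)
      by (rewrite Ey, <- El, gprod_rcons, mulA, simple_mulKr; auto).
    specialize (Hy k Hk). rewrite Eyk, Ey in Hy.
    pose proof (ell_mul_le m (gprod G l)). pose proof (ell_gprod_le (sword_of_Forall F)).
    rewrite length_app in Len. simpl in Len. lia.
Qed.

Lemma deodhar_lemma (a r : G) : is_min_rep a -> simple G r ->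
  is_min_rep (r ** a) \/ exists k, K k /\ r ** a = a ** k.
Proof.
  intros Ha Hr.
  destruct (classic (forall k, K k -> ell G (r ** a) < ell G (r ** a ** k))) as [H|H].
  - left. apply min_rep_of_rascents; auto.
  - right. apply not_all_ex_not in H as [k H]. apply imply_to_and in H as [Hk H].
    exists k. split; auto.
    pose proof (min_rep_ell_mul Ha (inWJ_gen Hk)) as Eak. rewrite (ell_simple (HK Hk)) in Eak.
    destruct (ell_rmul_simple (r ** a) (HK Hk)); [lia|].
    pose proof (ell_lmul_simple_le a Hr).
    pose proof (ell_lmul_simple_le (r ** (a ** k)) Hr). rewrite simple_mulK, mulA in H2 by auto.
    symmetry. apply lmul_eq_rmul_of_descent_switch; auto; rewrite ?mulA; lia.
Qed.

Lemma min_rep_ldescent (u r : G) : is_min_rep u -> simple G r ->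
  ell G (r ** u) < ell G u -> is_min_rep (r ** u).
Proof.
  intros Hu Hr Hl. apply min_rep_of_rascents. intros k Hk.
  destruct (ell_rmul_simple (r ** u) (HK Hk)) as [E|E]; [lia|].
  pose proof (min_rep_rascent Hu Hk). pose proof (ell_lmul_simple_le (r ** u ** k) Hr).
  rewrite <- !mulA, simple_mulK, mulA in H0 by auto. lia.
Qed.

Lemma ell_mul_lascents (q h : G) : (forall k, K k -> ell G h < ell G (k ** h)) ->
  inWJ G K q -> ell G (q ** h) = ell G q + ell G h.
Proof.
  intros H Hq. assert (R : is_min_rep (inv h)).
  { apply min_rep_of_rascents. intros k Hk.
    rewrite <- (invg_simple (HK Hk)), <- invMg, !ell_invg. auto. }
  pose proof (min_rep_ell_mul R (inWJV Hq)). rewrite <- invMg, !ell_invg in H0. lia.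
Qed.

Lemma bruhat_le_lmul_min_rep (c z z' : G) : is_min_rep c -> inWJ G K z' ->
  le z z' -> le (c ** z) (c ** z').
Proof.
  intros Hc Hz' Hle.
  induction Hle as [z z' Hzz' | z | z y z' Hzy IH1 Hyz' IH2].
  - pose proof (inWJ_bruhat_le (bruhat_step_le Hzz') Hz') as Hz.
    destruct Hzz' as [t [Ht [-> Hl]]].
    apply bruhat_step_le. rewrite mulA. apply bruhat_step_rmul; auto.
    rewrite <- mulA, (min_rep_ell_mul Hc Hz), (min_rep_ell_mul Hc Hz'). lia.
  - apply bruhat_le_refl.
  - apply (bruhat_le_trans (IH1 (inWJ_bruhat_le Hyz' Hz')) (IH2 Hz')).
Qed.

Lemma bruhat_le_rmul_lascents (h q q' : G) : (forall k, K k -> ell G h < ell G (k ** h)) ->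
  inWJ G K q' -> le q q' -> le (q ** h) (q' ** h).
Proof.
  intros Hh Hq' Hle.
  induction Hle as [q q' Hqq' | q | q y q' Hqy IH1 Hyq' IH2].
  - pose proof (inWJ_bruhat_le (bruhat_step_le Hqq') Hq') as Hq.
    destruct Hqq' as [t [Ht [-> Hl]]].
    replace (q ** t ** h) with (q ** h ** (inv h ** t ** h))
      by (rewrite !mulA, mulgK; auto).
    apply bruhat_step_le, bruhat_step_rmul; [apply reflection_conjV; auto|].
    replace (q ** h ** (inv h ** t ** h)) with (q ** t ** h)
      by (rewrite !mulA, mulgK; auto).
    rewrite (ell_mul_lascents Hh Hq), (ell_mul_lascents Hh Hq'). lia.
  - apply bruhat_le_refl.
  - apply (bruhat_le_trans (IH1 (inWJ_bruhat_le Hyq' Hq')) (IH2 Hq')).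
Qed.

End Parabolic.

(** * Billey–Postnikov decompositions *)

Lemma supp_simple (x : G) : forall t, supp G x t -> simple G t.
Proof. intros t [l [W [_ [_ I]]]]. eapply Forall_forall; eauto. Qed.
Arguments supp_simple : clear implicits.

Lemma inWJ_supp (x : G) : inWJ G (supp G x) x.
Proof.
  destruct (reduced_word_ex x) as [l [W [E Len]]]. exists l. split; auto.
  apply Forall_forall. intros t I. exists l. auto.
Qed.

Lemma supp_ldescent (r u t : G) : simple G r -> ell G (r ** u) < ell G u ->
  supp G (r ** u) t -> supp G u t.
Proof.
  intros Hr Hl [l [W [E [Len I]]]]. exists (r :: l). repeat split.
  - constructor; auto.
  - simpl. rewrite E, simple_mulK; auto.
  - simpl. destruct (ell_lmul_simple u Hr); lia.
  - now right.
Qed.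

Lemma ldescent_ex (u : G) : 0 < ell G u -> exists r, simple G r /\ ell G (r ** u) < ell G u.
Proof.
  intro Hu. destruct (reduced_word_ex u) as [[|r l] [W [<- Len]]]; simpl in *; [lia|].
  inversion W as [|? ? Hr Wl]; subst. exists r. split; auto.
  simpl. rewrite simple_mulK; auto. pose proof (ell_gprod_le Wl). lia.
Qed.

Lemma rdescent_ex (v : G) : 0 < ell G v -> exists r, simple G r /\ ell G (v ** r) < ell G v.
Proof.
  intro Hv. rewrite <- ell_invg in Hv. destruct (ldescent_ex Hv) as [r [Hr Hl]].
  exists r. split; auto. rewrite ell_rmul_invg, ell_invg in Hl; auto.
Qed.

Lemma bruhat_le_mul_additive (u v a c : G) : ell G (u ** v) = ell G u + ell G v ->
  le a u -> le c v -> le (a ** c) (u ** v).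
Proof.
  remember (ell G v) as n eqn:En. revert v c En.
  induction n as [|n IH]; intros v c En Huv Ha Hc.
  - pose proof (bruhat_le_ell Hc).
    rewrite (@ell_eq0 v), (@ell_eq0 c), !mulg1 by lia. auto.
  - destruct (@rdescent_ex v) as [r [Hr Hvr]]; [lia|].
    set (v' := v ** r) in *.
    assert (Ev : v = v' ** r) by (unfold v'; rewrite simple_mulKr; auto).
    assert (Huv' : ell G (u ** v') = ell G u + ell G v').
    { pose proof (ell_mul_le u v'). pose proof (ell_rmul_simple_le (u ** v') Hr).
      rewrite <- mulA, <- Ev in H0. lia. }
    assert (Huv'r : ell G (u ** v') < ell G (u ** v' ** r)) by (rewrite <- mulA, <- Ev; lia).
    assert (Ev' : ell G v' = n)
      by (destruct (ell_rmul_simple v Hr) as [E|E]; fold v' in E; lia).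
    assert (IHv' : forall c', le c' v' -> le (a ** c') (u ** v'))
      by (intros; apply IH; auto; lia).
    rewrite Ev, mulA.
    destruct (ell_rmul_simple c Hr) as [Uc|Dc].
    + apply (bruhat_le_trans (IHv' c (lifting_rmixed Hr Hc ltac:(lia) Hvr))).
      apply bruhat_step_le, step_rascent; auto.
    + specialize (IHv' _ (lifting_rdescents Hr Hc ltac:(lia) Hvr)).
      replace (a ** c) with (a ** (c ** r) ** r) by (rewrite <- mulA, simple_mulKr; auto).
      destruct (ell_rmul_simple (a ** (c ** r)) Hr) as [Up|Down].
      * apply lifting_rascents; auto. lia.
      * apply (bruhat_le_trans (y := a ** (c ** r))).
        -- apply bruhat_step_le, step_rdescent; auto. lia.
        -- apply (bruhat_le_trans IHv'), bruhat_step_le, step_rascent; auto.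
Qed.

Lemma supp_of_conj (u a r k : G) : le a u -> simple G k -> r ** a = a ** k ->
  supp G u r -> supp G u k.
Proof.
  intros Hau Hk E Hr.
  pose proof (supp_simple u) as HS.
  assert (Ha : inWJ G (supp G u) a) by (apply (inWJ_bruhat_le HS Hau), inWJ_supp).
  apply (simple_inWJ HS); auto.
  replace k with (inv a ** r ** a) by (rewrite <- mulA, E, mulKg; auto).
  apply inWJM; [apply inWJM|]; auto using inWJ_gen. apply (inWJV HS); auto.
Qed.

Section BilleyPostnikov.
Variable J : G -> Prop.
Hypothesis HJ : forall t, J t -> simple G t.

Definition bp_condition (u v : G) : Prop := forall t, supp G u t -> J t -> DL G v t.

Lemma bp_condition_ldescent (u v r : G) : simple G r -> ell G (r ** u) < ell G u ->
  bp_condition u v -> bp_condition (r ** u) v.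
Proof. intros Hr Hl Hbp t Ht Jt. apply Hbp; auto. eapply supp_ldescent; eauto. Qed.

Lemma bp_projection_ldescent (u v x r : G) : is_min_rep J u -> bp_condition u v ->
  simple G r -> ell G (r ** u) < ell G u -> ell G (r ** x) < ell G x ->
  le (upJ G J (r ** x)) (r ** u) -> le (downJ G J (r ** x)) v ->
  le (upJ G J x) u /\ le (downJ G J x) v.
Proof.
  intros Hu Hbp Hr Hru Hrx I1 I2.
  set (a := upJ G J x) in *. set (b := downJ G J x) in *.
  assert (Ex : x = a ** b) by (symmetry; apply upJ_mul_downJ).
  assert (Ha : is_min_rep J a) by apply (upJ_min_rep HJ).
  assert (Hb : inWJ G J b) by apply downJ_inWJ.
  pose proof (min_rep_ell_mul HJ Ha Hb) as Elx. rewrite <- Ex in Elx.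
  destruct (deodhar_lemma HJ Ha Hr) as [D | [k [Hk D]]].
  - assert (Erx : r ** x = (r ** a) ** b) by (rewrite Ex; apply mulA).
    destruct (parabolic_decomp HJ D Hb) as [U1 U2]. rewrite Erx, U1 in I1. rewrite Erx, U2 in I2.
    pose proof (min_rep_ell_mul HJ D Hb) as Elrx. rewrite <- Erx in Elrx.
    split; auto.
    pose proof (lifting_lascents Hr I1). rewrite !simple_mulK in H by auto.
    apply H; lia.
  - assert (Erx : r ** x = a ** (k ** b)) by (rewrite Ex, mulA, D, mulA; auto).
    assert (Hkb : inWJ G J (k ** b)) by (apply inWJM, Hb; apply inWJ_gen; auto).
    destruct (parabolic_decomp HJ Ha Hkb) as [U1 U2]. rewrite Erx, U1 in I1. rewrite Erx, U2 in I2.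
    assert (Hau : le a u)
      by (apply (bruhat_le_trans I1), bruhat_step_le, step_ldescent; auto).
    split; auto.
    assert (Hku : supp G u k)
      by (apply (supp_of_conj Hau (HJ Hk) D), supp_of_descent; auto).
    destruct (Hbp k Hku Hk) as [_ Hkv].
    pose proof (lifting_ldescent (HJ Hk) I2 Hkv). rewrite simple_mulK in H; auto.
Qed.

Lemma bp_projection (u v x : G) : is_min_rep J u -> inWJ G J v -> bp_condition u v ->
  le x (u ** v) -> le (upJ G J x) u /\ le (downJ G J x) v.
Proof.
  remember (ell G u) as n eqn:En. revert u x En.
  induction n as [|n IH]; intros u x En Hu Hv Hbp Hx.
  - rewrite (@ell_eq0 u), mul1g in * by lia.
    destruct (parabolic_decomp_inWJ HJ (inWJ_bruhat_le HJ Hx Hv)) as [-> ->].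
    split; auto using bruhat_le_refl.
  - destruct (@ldescent_ex u) as [r [Hr Hru]]; [lia|].
    assert (Hn : n = ell G (r ** u)) by (destruct (ell_lmul_simple u Hr); lia).
    pose proof (min_rep_ldescent HJ Hu Hr Hru) as Hu'.
    pose proof (bp_condition_ldescent Hr Hru Hbp) as Hbp'.
    assert (Hrw : ell G (r ** (u ** v)) < ell G (u ** v)).
    { rewrite mulA, (min_rep_ell_mul HJ Hu Hv), (min_rep_ell_mul HJ Hu' Hv). lia. }
    destruct (ell_lmul_simple x Hr) as [Up|Down].
    + destruct (IH (r ** u) x Hn Hu' Hv Hbp') as [I1 I2].
      { rewrite <- mulA. apply lifting_lmixed; auto. lia. }
      split; auto. apply (bruhat_le_trans I1), bruhat_step_le, step_ldescent; auto.
    + destruct (IH (r ** u) (r ** x) Hn Hu' Hv Hbp') as [I1 I2].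
      { rewrite <- mulA. apply lifting_ldescents; auto. lia. }
      apply (bp_projection_ldescent Hu Hbp Hr Hru); auto. lia.
Qed.

End BilleyPostnikov.

(** * The middle multiplication map *)

Section MiddleMultiplication.
Variables (w : G) (J : G -> Prop) (s : G).
Hypothesis HJ : forall t, J t -> simple G t.
Hypothesis HBP : BP_decomposition G J w.
Hypothesis Hs : simple G s.
Hypothesis Hsupp : forall t, (supp G (upJ G J w) t /\ supp G (downJ G J w) t) <-> t = s.

Local Notation phi := (middle_mult G J s).
Local Notation P := (interval G (one G) w).
Local Notation u := (upJ G J w).
Local Notation v := (downJ G J w).

Lemma s_in_J : J s.
Proof. apply (supp_inWJ HJ (downJ_inWJ J w)), Hsupp; auto. Qed.

Lemma supp_up_J (t : G) : supp G u t -> J t -> t = s.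
Proof.
  intros Hu Ht. apply Hsupp. split; auto.
  destruct (HBP Hu Ht) as [Ht' Hl]. apply supp_of_descent; auto.
Qed.

Lemma middle_multE (x : G) : phi x = upJ G J x ** (s ** downJ G J x).
Proof. symmetry. apply mulA. Qed.

Lemma middle_mult_decomp (x : G) :
  upJ G J (phi x) = upJ G J x /\ downJ G J (phi x) = s ** downJ G J x.
Proof.
  rewrite middle_multE. apply (parabolic_decomp HJ (upJ_min_rep HJ x)).
  apply inWJM; [apply inWJ_gen, s_in_J | apply downJ_inWJ].
Qed.

Lemma middle_mult_invol (x : G) : phi (phi x) = x.
Proof.
  destruct (middle_mult_decomp x) as [E1 E2].
  rewrite middle_multE, E1, E2, simple_mulK; auto. apply upJ_mul_downJ.
Qed.

Lemma middle_mult_inj (x y : G) : phi x = phi y -> x = y.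
Proof. intro E. rewrite <- (middle_mult_invol x), <- (middle_mult_invol y), E. auto. Qed.

Lemma middle_mult_neq (x : G) : phi x <> x.
Proof.
  rewrite middle_multE. intro E. rewrite <- (upJ_mul_downJ J x) in E at 3.
  apply mulgI in E. rewrite <- (mul1g G (downJ G J x)) in E at 2.
  apply mulIg in E. apply (simple_neq1 Hs E).
Qed.

Lemma middle_mult_reflection (x : G) : exists t, reflection G t /\ phi x = x ** t.
Proof.
  exists (inv (downJ G J x) ** s ** downJ G J x). split.
  - apply reflection_conjV, reflection_simple; auto.
  - rewrite <- (upJ_mul_downJ J x) at 2. now rewrite !mulA, mulgK.
Qed.

Lemma middle_mult_ell (x : G) :
  ell G (phi x) = ell G (upJ G J x) + ell G (s ** downJ G J x) /\
  ell G x = ell G (upJ G J x) + ell G (downJ G J x).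
Proof.
  split.
  - rewrite middle_multE. apply (min_rep_ell_mul HJ (upJ_min_rep HJ x)).
    apply inWJM; [apply inWJ_gen, s_in_J | apply downJ_inWJ].
  - rewrite <- (upJ_mul_downJ J x) at 1.
    apply (min_rep_ell_mul HJ (upJ_min_rep HJ x) (downJ_inWJ J x)).
Qed.

Lemma middle_mult_interval (x : G) : P x -> P (phi x).
Proof.
  intros [_ Hx]. split; [apply bruhat_le1|].
  rewrite <- (upJ_mul_downJ J w) in Hx |- *.
  destruct (bp_projection HJ (upJ_min_rep HJ w) (downJ_inWJ J w) HBP Hx) as [I1 I2].
  rewrite middle_multE.
  apply bruhat_le_mul_additive; auto.
  - apply (min_rep_ell_mul HJ (upJ_min_rep HJ w) (downJ_inWJ J w)).
  - apply lifting_ldescent; auto. apply (HBP (s := s)); [apply Hsupp | apply s_in_J]; auto.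
Qed.

Lemma middle_mult_covers (x : G) : P x -> covers_in G P x (phi x) \/ covers_in G P (phi x) x.
Proof.
  intro Px. pose proof (middle_mult_interval Px) as Pphx.
  destruct (middle_mult_reflection x) as [t [Ht E]].
  destruct (middle_mult_ell x) as [L1 L2].
  destruct (ell_lmul_simple (downJ G J x) Hs) as [Up|Down].
  - left. apply covers_in_of_ell; auto; [|lia].
    rewrite E. apply bruhat_step_rmul; auto. rewrite <- E. lia.
  - right. apply covers_in_of_ell; auto; [|lia].
    assert (Ex : x = phi x ** t) by (rewrite E, <- mulA, reflection_sqr, mulg1; auto).
    rewrite Ex at 2. apply bruhat_step_rmul; auto. rewrite <- Ex. lia.
Qed.

Lemma middle_mult_step_downJ (c b d : G) : is_min_rep J c -> inWJ G J d -> step b d ->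
  phi (c ** b) = c ** d \/ le (phi (c ** b)) (phi (c ** d)).
Proof.
  intros Hc Hd Hbd.
  assert (Hb : inWJ G J b) by apply (inWJ_bruhat_le HJ (bruhat_step_le Hbd) Hd).
  assert (Es : forall z, inWJ G J z -> phi (c ** z) = c ** (s ** z)).
  { intros z Hz. destruct (parabolic_decomp HJ Hc Hz) as [U D].
    rewrite middle_multE, U, D. auto. }
  rewrite !Es; auto.
  destruct (bruhat_step_lmul_simple Hs Hbd) as [<- | Hle]; [now left | right].
  apply (bruhat_le_lmul_min_rep HJ Hc); auto. apply inWJM; auto using inWJ_gen, s_in_J.
Qed.

Lemma middle_mult_supp_up (p d : G) : inWJ G (supp G u) p -> inWJ G J d ->
  phi (p ** d) = p ** s ** d.
Proof.
  intros Hp Hd. set (m := upJ G J p). set (h := downJ G J p).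
  assert (Emh : m ** h = p) by apply upJ_mul_downJ.
  assert (Hm : is_min_rep J m) by apply (upJ_min_rep HJ).
  assert (Hh : inWJ G J h) by apply downJ_inWJ.
  (* every letter of [h] lies in [J] and in [supp u], hence equals [s] *)
  assert (Hsh : s ** h = h ** s).
  { destruct (reduced_word_ex m) as [M [WM [EM LM]]].
    destruct (inWJ_reduced_word HJ Hh) as [H [FH [EH LH]]].
    assert (FMH : Forall (supp G u) (M ++ H)).
    { apply (reduced_word_inWJ (supp_simple u) Hp).
      - apply sword_cat. split; auto. apply (sword_of_Forall HJ FH).
      - rewrite gprod_cat, EM, EH. exact Emh.
      - rewrite length_app, LM, LH, <- (min_rep_ell_mul HJ Hm Hh), Emh. auto. }
    apply Forall_app in FMH as [_ FH'].
    rewrite <- EH. apply gprod_commute.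
    rewrite Forall_forall in *. intros z Iz. symmetry. apply supp_up_J; auto. }
  assert (Hhd : inWJ G J (h ** d)) by (apply inWJM; auto).
  replace (p ** d) with (m ** (h ** d)) by (rewrite mulA, Emh; auto).
  destruct (parabolic_decomp HJ Hm Hhd) as [U D].
  unfold middle_mult. rewrite U, D, <- Emh.
  rewrite !mulA, <- (mulA G m s h), Hsh, mulA. reflexivity.
Qed.

Lemma lascents_of_supp_down (h : G) : inWJ G (supp G v) h -> ell G h < ell G (s ** h) ->
  forall k, supp G u k -> ell G h < ell G (k ** h).
Proof.
  intros Hh Hsh k Hk. pose proof (supp_simple u k Hk) as Hks.
  destruct (ell_lmul_simple h Hks) as [E|E]; [lia|].
  exfalso. assert (Hkv : supp G v k).
  { apply (supp_inWJ (supp_simple v) Hh), supp_of_descent; auto. lia. }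
  rewrite (proj1 (Hsupp k) (conj Hk Hkv)) in E. lia.
Qed.

Lemma middle_mult_step_upJ (p c d : G) : inWJ G (supp G u) c -> inWJ G (supp G v) d ->
  inWJ G J d -> step p c -> phi (p ** d) = c ** d \/ le (phi (p ** d)) (phi (c ** d)).
Proof.
  intros Hc Hdv Hd Hpc.
  assert (Hp : inWJ G (supp G u) p)
    by apply (inWJ_bruhat_le (supp_simple u) (bruhat_step_le Hpc) Hc).
  assert (Hsu : supp G u s) by (apply Hsupp; auto).
  rewrite !middle_mult_supp_up; auto.
  destruct (ell_lmul_simple d Hs) as [Up|Down].
  - destruct (bruhat_step_rmul_simple Hs Hpc) as [<- | Hle]; [now left | right].
    apply (bruhat_le_rmul_lascents (supp_simple u) (lascents_of_supp_down Hdv ltac:(lia))); auto.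
    apply inWJM; auto using inWJ_gen.
  - right. rewrite <- !mulA.
    apply (bruhat_le_rmul_lascents (supp_simple u)); auto using bruhat_step_le.
    apply lascents_of_supp_down.
    + apply inWJM; auto. apply inWJ_gen. apply Hsupp; auto.
    + rewrite simple_mulK; auto. lia.
Qed.

Lemma middle_mult_special (x y : G) : covers_in G P x y ->
  phi x = y \/ bruhat_lt G (phi x) (phi y).
Proof.
  intro Hcov. pose proof (covers_in_interval_step Hcov) as [t [Ht [Ext Hl]]].
  destruct Hcov as [_ [[_ Hyw] [[_ Hne] _]]].
  cut (phi x = y \/ le (phi x) (phi y)).
  { intros [E | E]; auto. right. split; auto. intro E'. apply Hne, middle_mult_inj; auto. }
  assert (Ex : x = y ** t) by (rewrite Ext, <- mulA, reflection_sqr, mulg1; auto).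
  set (c := upJ G J y) in *. set (d := downJ G J y) in *.
  assert (Ey : y = c ** d) by (symmetry; apply upJ_mul_downJ).
  assert (Hc : is_min_rep J c) by apply (upJ_min_rep HJ).
  assert (Hd : inWJ G J d) by apply downJ_inWJ.
  destruct (reduced_word_ex c) as [C [WC [EC LC]]].
  destruct (inWJ_reduced_word HJ Hd) as [D [FD [ED LD]]].
  pose proof (sword_of_Forall HJ FD) as WD.
  destruct (strong_exchange_r_cat Ht WC WD) as [[C1 [a [C2 [-> E]]]] | [D1 [a [D2 [-> E]]]]];
    [rewrite EC, ED, <- Ey, <- Ex; lia | ..];
    rewrite EC, ED, <- Ey, <- Ex in E; rewrite E, Ey.
  - destruct (bp_projection HJ (upJ_min_rep HJ w) (downJ_inWJ J w) HBP
                (x := y) ltac:(rewrite upJ_mul_downJ; auto)) as [Hcu Hdv].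
    apply middle_mult_step_upJ; auto.
    + apply (inWJ_bruhat_le (supp_simple u) Hcu), inWJ_supp.
    + apply (inWJ_bruhat_le (supp_simple v) Hdv), inWJ_supp.
    + destruct (delete_letter_reflection C1 C2 (proj1 (Forall_delete WC))) as [t' [Ht' Et']].
      rewrite <- EC, Et'. apply bruhat_step_rmul; auto.
      rewrite <- Et', EC. pose proof (ell_delete_lt WC). lia.
  - apply middle_mult_step_downJ; auto.
    destruct (delete_letter_reflection D1 D2 (proj1 (Forall_delete WD))) as [t' [Ht' Et']].
    rewrite <- ED, Et'. apply bruhat_step_rmul; auto.
    rewrite <- Et', ED. pose proof (ell_delete_lt WD). lia.
Qed.

End MiddleMultiplication.

End Coxeter.

Theorem proposition6p1 (G : gen_group) (HG : coxeter_system G)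
  (w : G) (J : G -> Prop) (s : G)
  (HJ : forall t, J t -> simple G t)
  (HBP : BP_decomposition G J w)
  (Hs : simple G s)
  (Hsupp : forall t, (supp G (upJ G J w) t /\ supp G (downJ G J w) t) <-> t = s) :
  special_matching G (interval G (one G) w) (middle_mult G J s).
Proof.
  split; [|split; [|split; [|split]]].
  - intros x Px. apply (middle_mult_interval HG HJ HBP Hs Hsupp Px).
  - intros x _. apply (middle_mult_invol HG HJ Hs Hsupp).
  - intros x _. apply (middle_mult_neq HG Hs).
  - intros x Px. apply (middle_mult_covers HG HJ HBP Hs Hsupp Px).
  - intros x y Hxy. apply (middle_mult_special HG HJ HBP Hs Hsupp Hxy).
Qed.
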